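(* Let $(A,E,\alpha,\beta,\gamma)$ be an exact couple that converges conditionally to the colimit, and assume $RE^\infty_s=0$ for all $s$. Then the associated spectral sequence converges weakly to $A_\infty=\operatorname{colim}_sA_s$ with the filtration $F_sA_\infty=\operatorname{im}(\iota_s\colon A_s\to A_\infty)$, and this filtration is complete. Moreover $F_{-\infty}A_\infty\cong W$.
   Context: Work in the abelian category $\mathcal{A}$ of $\mathbb{Z}$-graded $R$-modules ($R$ a ring). An exact couple $(A,E,\alpha,\beta,\gamma)$ consists of objects $A_s,E_s$ ($s\in\mathbb{Z}$) and morphisms $\alpha_s\colon A_{s-1}\to A_s$, $\beta_s\colon A_s\to E_s$, $\gamma_s\colon E_s\to A_{s-1}$ such that $A_{s-1}\xrightarrow{\alpha}A_s\xrightarrow{\beta}E_s\xrightarrow{\gamma}A_{s-1}$ is exact at each vertex, for all $s$ (internal degree of $\alpha$ is $0$; those of $\beta,\gamma$ are $0,-1$ or $-1,0$). Its spectral sequence: $Z^r_s=\gamma^{-1}\operatorname{im}(\alpha^{r-1}\colon A_{s-r}\to A_{s-1})$, $B^r_s=\beta\ker(\alpha^{r-1}\colon A_s\to A_{s+r-1})$, $E^r_s=Z^r_s/B^r_s$, $d^r_s[x]=[\beta(y)]$ where $\gamma(x)=\alpha^{r-1}(y)$. Set $Z^\infty_s=\lim_rZ^r_s=\bigcap_rZ^r_s$, $B^\infty_s=\operatorname{colim}_rB^r_s=\bigcup_rB^r_s$, $E^\infty_s=Z^\infty_s/B^\infty_s$, $RE^\infty_s=\operatorname{Rlim}_rZ^r_s$,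 where $\operatorname{Rlim}=\lim^1$. $A_\infty=\operatorname{colim}_sA_s$ with structure maps $\iota_s$, $A_{-\infty}=\lim_sA_s$, $RA_{-\infty}=\operatorname{Rlim}_sA_s$. The exact couple converges conditionally to the colimit if $A_{-\infty}=0$ and $RA_{-\infty}=0$. A filtration of $G$ is a chain of subobjects $\cdots\subset F_{s-1}G\subset F_sG\subset\cdots\subset G$; $F_\infty G=\operatorname{colim}_sF_sG$, $F_{-\infty}G=\lim_sF_sG$, $RF_{-\infty}G=\operatorname{Rlim}_sF_sG$. It is exhaustive if $F_\infty G\to G$ is an isomorphism, Hausdorff if $F_{-\infty}G=0$, complete if $RF_{-\infty}G=0$. A spectral sequence converges weakly to filtered $G$ if the filtration is exhaustive and $E^\infty_s\cong F_sG/F_{s-1}G$ for all $s$. Boardman's whole-plane obstruction: $\operatorname{im}^rA_s=\operatorname{im}(\alpha^r\colon A_{s-r}\to A_s)$, $K_\infty\operatorname{im}^rA_s=\ker(\iota_s)\cap\operatorname{im}^rA_s$, $W=\operatorname{colim}_s\operatorname{Rlim}_rK_\infty\operatorname{im}^rA_s$. *)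

From HB Require Import structures.
From mathcomp Require Import all_boot all_order all_algebra.
Set Implicit Arguments.
Unset Strict Implicit.
Unset Printing Implicit Defensive.
Import GRing.Theory.
Local Open Scope ring_scope.

(* A s t is the degree-t part of A_s.
   calpha s t  = alpha_{s+1} : A_s -> A_{s+1}            (internal degree 0)
   cbeta s t   = beta_s      : A_s -> E_s                (internal degree 0)
   cgamma s t  = gamma_{s+1} : E_{s+1} -> A_s            (internal degree -1) *)
Record couple (R : pzRingType) := Couple {
  cA : int -> int -> lmodType R;
  cE : int -> int -> lmodType R;
  calpha : forall s t, {linear cA s t -> cA (s + 1) t};
  cbeta : forall s t, {linear cA s t -> cE s t};
  cgamma : forall s t, {linear cE (s + 1) t -> cA s (t - 1)} }.

Section Defs.
Variables (R : pzRingType) (C : couple R).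
Local Notation A := (cA C).
Local Notation E := (cE C).
Local Notation alpha := (calpha C).
Local Notation beta := (cbeta C).
Local Notation gamma := (cgamma C).

Definition is_exact : Prop :=
  forall s t : int,
    (forall x : A (s + 1) t, beta (s + 1) t x = 0 <-> exists y : A s t, alpha s t y = x) /\
    (forall e : E (s + 1) t, gamma s t e = 0 <-> exists y : A (s + 1) t, beta (s + 1) t y = e) /\
    (forall x : A s (t - 1), alpha s (t - 1) x = 0 <-> exists e : E (s + 1) t, gamma s t e = x).

Definition tot (t : int) := {s : int & A s t}.
Definition step (t : int) (x : tot t) : tot t :=
  Tagged (fun s => A s t) (alpha (tag x) t (tagged x)).
Definition alpha_it (n : nat) (s t : int) (a : A s t) : tot t :=
  iter n (@step t) (Tagged (fun s => A s t) a).
Definition im_it (n : nat) (s t : int) (b : A s t) : Prop :=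
  exists c : A (s - n%:Z) t, alpha_it n c = Tagged (fun s => A s t) b.
Definition ker_it (n : nat) (s t : int) (a : A s t) : Prop :=
  tagged (alpha_it n a) = 0 :> A (tag (alpha_it n a)) t.

(* Z^{n+1}_{s+1} = gamma^{-1} im(alpha^n : A_{s-n} -> A_s), as a predicate on E_{s+1} *)
Definition Zr (n : nat) (s t : int) (e : E (s + 1) t) : Prop := im_it n (gamma s t e).
Definition Zinf (s t : int) (e : E (s + 1) t) : Prop := forall n, Zr n e.
(* B^infty_{s+1} = union_n beta ker(alpha^n : A_{s+1} -> A_{s+1+n}) *)
Definition Binf (s t : int) (e : E (s + 1) t) : Prop :=
  exists (n : nat) (y : A (s + 1) t), ker_it n y /\ beta (s + 1) t y = e.
(* RE^infty_{s+1} = Rlim_r Z^r_{s+1} = 0 *)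
Definition RE_vanish (s t : int) : Prop :=
  forall z : nat -> E (s + 1) t, (forall n, Zr n (z n)) ->
  exists y : nat -> E (s + 1) t, (forall n, Zr n (y n)) /\ forall n, z n = y n - y n.+1.

(* A_{-infty} = lim_s A_s = 0  and  RA_{-infty} = Rlim_s A_s = 0 *)
Definition lim_A_vanish : Prop :=
  forall (t : int) (a : forall s, A s t), (forall s, alpha s t (a s) = a (s + 1)) ->
  forall s, a s = 0.
Definition Rlim_A_vanish : Prop :=
  forall (t : int) (z : forall s, A s t),
  exists y : forall s, A s t, forall s, z (s + 1) = y (s + 1) - alpha s t (y s).
Definition conv_cond : Prop := lim_A_vanish /\ Rlim_A_vanish.

Variables (G : int -> lmodType R) (iota : forall s t, {linear A s t -> G t}).

Definition is_colim : Prop :=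
  (forall s t (a : A s t), iota (s + 1) t (alpha s t a) = iota s t a) /\
  (forall t (g : G t), exists s (a : A s t), iota s t a = g) /\
  (forall s t (a : A s t), iota s t a = 0 <-> exists n, ker_it n a).

Definition Filt (s t : int) (g : G t) : Prop := exists a : A s t, iota s t a = g.

(* an isomorphism of subquotients  Z/B ~= F/F'  (Z,B submodules of M, F' <= F submodules of N),
   given by a map Z -> F which is R-linear modulo F', surjective modulo F', with
   preimage of F' equal to B *)
Definition sq_iso (M N : lmodType R) (Z B : M -> Prop) (F F' : N -> Prop) : Prop :=
  exists phi : M -> N,
    [/\ forall x, Z x -> F (phi x),
        forall x y, Z x -> Z y -> F' (phi (x + y) - (phi x + phi y)),
        forall (a : R) x, Z x -> F' (phi (a *: x) - a *: phi x),
        forall x, Z x -> (F' (phi x) <-> B x) &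
        forall y, F y -> exists x, Z x /\ F' (y - phi x)].

(* weak convergence to G with filtration F: exhaustive, and E^infty_s ~= F_s/F_{s-1} *)
Definition weak_conv : Prop :=
  (forall t (g : G t), exists s, Filt s g) /\
  (forall s t, sq_iso (@Zinf s t) (@Binf s t) (@Filt (s + 1) t) (@Filt s t)).

(* completeness: Rlim_s F_s G = 0 *)
Definition filt_complete : Prop :=
  forall t (z : int -> G t), (forall s, Filt s (z s)) ->
  exists y : int -> G t, (forall s, Filt s (y s)) /\ forall s, z (s + 1) = y (s + 1) - y s.

Definition Finf (t : int) (g : G t) : Prop := forall s, Filt s g.

(* elements of prod_r K_infty im^r A_s, with K_infty im^r A_s = ker iota_s /\ im^r A_s *)
Definition Krep (s t : int) (x : nat -> A s t) : Prop :=
  forall r, iota s t (x r) = 0 /\ im_it r (x r).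
(* the image of 1 - shift, whose cokernel is Rlim_r K_infty im^r A_s *)
Definition Dsub (s t : int) (x : nat -> A s t) : Prop :=
  exists y, Krep y /\ forall r, x r = y r - y r.+1.
(* the class of x vanishes after applying alpha^n (transition maps of colim_s) *)
Fixpoint evD (n : nat) (s t : int) (x : nat -> A s t) : Prop :=
  match n with
  | 0 => Dsub x
  | n'.+1 => evD n' (fun r => alpha s t (x r))
  end.

(* F_{-infty} G ~= W = colim_s Rlim_r K_infty im^r A_s  (in degree t):
   an R-linear map W -> G given on representatives, compatible with the colimit
   transition maps, with image F_{-infty} G and trivial kernel *)
Definition Finf_iso_W (t : int) : Prop :=
  exists psi : forall s, (nat -> A s t) -> G t,
    [/\ forall s x, Krep x -> Finf (psi s x),
        (forall s x y, Krep x -> Krep y -> psi s (fun r => x r + y r) = psi s x + psi s y) /\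
        (forall s (a : R) x, Krep x -> psi s (fun r => a *: x r) = a *: psi s x),
        forall s x, Krep x -> psi (s + 1) (fun r => alpha s t (x r)) = psi s x,
        forall s x, Krep x -> (psi s x = 0 <-> exists n, evD n x) &
        forall g, Finf g -> exists s x, Krep x /\ psi s x = g].

End Defs.

(* An element of A_s lying in im(alpha^n) for every n is zero.  Indeed it lifts along
   alpha to another such element: lifts d_r in im(alpha^r) exist for every r, their
   differences are gamma of a sequence in Z^(r+1), and RE^infty = 0 corrects them to a
   single lift.  So the element ends an infinite backward alpha-chain, and is a coordinate
   of an element of lim_s A_s = 0.
   Hence Z^infty_s = ker gamma = im beta, which identifies E^infty_s with F_s/F_(s-1).
   Completeness is Rlim_s A_s = 0 pushed along iota.  Finally, for x in
   prod_r K_infty im^r A_s the equation (1 - shift) c = x has a solution c in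
   prod_r im^r A_s (again by Rlim_s A_s = 0), unique by the first step; x |-> iota_s (c 0)
   induces the isomorphism W ~= F_(-infty). *)
From HB Require Import structures.
From mathcomp Require Import all_boot all_order all_algebra.
From mathcomp Require Import zify.
From Stdlib Require Import ClassicalEpsilon.
From Stdlib Require ChoiceFacts.
Set Implicit Arguments.
Unset Strict Implicit.
Unset Printing Implicit Defensive.
Import GRing.Theory.
Local Open Scope ring_scope.

Lemma int_shift (P : int -> Prop) : (forall i, P (i + 1)) -> forall j, P j.
Proof. by move=> H j; rewrite -(subrK 1 j); apply: H. Qed.

Lemma dependent_choice : ChoiceFacts.DependentFunctionalChoice.
Proof. exact: ChoiceFacts.non_dep_dep_functional_choice choice. Qed.

Lemma subr_telescope_const (V : zmodType) (c c' : nat -> V) :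
  (forall r, c r - c r.+1 = c' r - c' r.+1) -> forall r, c r - c' r = c 0%N - c' 0%N.
Proof.
move=> h; elim=> // r <-; rewrite -[c r.+1](subKr (c r)) h opprB addrCA.
by rewrite addrC addrK.
Qed.

Section TotalSpace.
Variables (R : pzRingType) (C : couple R) (t : int).
Local Notation A := (cA C).
Local Notation alpha := (calpha C).
Local Notation step := (@step _ C t).
Local Notation Tg := (Tagged (fun s => A s t)).

Definition proj (k : int) (x : tot C t) : A k t :=
  match tag x =P k with
  | ReflectT e => eq_rect (tag x) (fun s => A s t) (tagged x) k e
  | ReflectF _ => 0
  end.

Lemma projE k (a : A k t) : proj k (Tg a) = a.
Proof. by rewrite /proj /=; case: eqP => // e; rewrite (eq_axiomK e). Qed.

Lemma proj_tag x : proj (tag x) x = tagged x.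
Proof. by case: x => s a; apply: projE. Qed.

Lemma proj_neq k x : tag x <> k -> proj k x = 0.
Proof. by rewrite /proj; case: eqP. Qed.

Lemma projK k x : tag x = k -> Tg (proj k x) = x.
Proof. by case: x => s a /= <-; rewrite projE. Qed.

Lemma proj_step j x : proj (j + 1) (step x) = alpha j t (proj j x).
Proof.
case: x => s a; case: (s =P j) => [<-|ne]; first by rewrite !projE.
by rewrite !proj_neq ?linear0 //= => /addIr.
Qed.

Lemma tag_iter n x : tag (iter n step x) = tag x + n%:Z.
Proof. by elim: n => [|n /= ->]; rewrite ?addr0 // -addrA -PoszD addn1. Qed.

(* [alpha^r a] read in [A j t]: a junk [0] unless [j = m + r]. *)
Definition apow (r : nat) (m j : int) (a : A m t) : A j t := proj j (alpha_it r a).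

Lemma alpha_apow (r : nat) (m j : int) (a : A m t) :
  alpha j t (apow r j a) = apow r.+1 (j + 1) a.
Proof. by rewrite /apow /alpha_it iterS proj_step. Qed.

Lemma apowSr (r : nat) (m j : int) (a : A m t) : apow r.+1 j a = apow r j (alpha m t a).
Proof. by rewrite /apow /alpha_it iterSr. Qed.

Lemma apow_is_linear r m j : linear (@apow r m j).
Proof.
move=> k a b; elim: r j => [|r IH] j.
  case: (m =P j) => [<-|ne]; first by rewrite /apow /= !projE.
  by rewrite /apow /= !proj_neq // scaler0 addr0.
by move: j; apply: int_shift => i; rewrite -!alpha_apow IH linearP.
Qed.

HB.instance Definition _ r m j :=
  GRing.isLinear.Build R (A m t) (A j t) _ (@apow r m j) (@apow_is_linear r m j).

Lemma alpha_it_apow (r : nat) (m j : int) (a : A m t) :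
  m + r%:Z = j -> alpha_it r a = Tg (apow r j a).
Proof. by move=> e; rewrite projK // tag_iter. Qed.

Lemma im_itP n s (b : A s t) : im_it n b <-> exists x, iter n step x = Tg b.
Proof.
split=> [[c e]|[x e]]; first by exists (Tg c).
have tagx : tag x = s - n%:Z by rewrite -(addrK n%:Z (tag x)) -tag_iter e.
by exists (proj (s - n%:Z) x); rewrite /alpha_it projK.
Qed.

Lemma im_itE n s (b : A s t) : im_it n b <-> exists c : A (s - n%:Z) t, apow n s c = b.
Proof.
split=> [[c e]|[c <-]]; exists c; first by rewrite /apow e projE.
by apply: alpha_it_apow; rewrite subrK.
Qed.

Lemma im_it_apow (r : nat) (m j : int) (a : A m t) : m + r%:Z = j -> im_it r (apow r j a).
Proof. by move=> e; apply/im_itP; exists (Tg a); rewrite -alpha_it_apow. Qed.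

Lemma im_it_lin n s k (a b : A s t) : im_it n a -> im_it n b -> im_it n (k *: a + b).
Proof.
by move=> /im_itE[c <-] /im_itE[d <-]; apply/im_itE; exists (k *: c + d); rewrite linearP.
Qed.

Lemma im_it0 n s : im_it n (0 : A s t).
Proof. by apply/im_itE; exists 0; rewrite linear0. Qed.

Lemma im_itD n s (a b : A s t) : im_it n a -> im_it n b -> im_it n (a + b).
Proof. by move=> ha hb; rewrite -[a]scale1r; apply: im_it_lin. Qed.

Lemma im_itZ n s k (a : A s t) : im_it n a -> im_it n (k *: a).
Proof. by move=> ha; rewrite -[_ *: _]addr0; apply: im_it_lin => //; apply: im_it0. Qed.

Lemma im_itB n s (a b : A s t) : im_it n a -> im_it n b -> im_it n (a - b).
Proof. by move=> ha hb; rewrite -scaleN1r addrC; apply: im_it_lin. Qed.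

Lemma im_itS n s (a : A s t) : im_it n.+1 a -> im_it n a.
Proof. by move=> /im_itP[x e]; apply/im_itP; exists (step x); rewrite -iterSr. Qed.

Lemma im_it_alpha n s (a : A s t) : im_it n a -> im_it n (alpha s t a).
Proof. by move=> /im_itP[x e]; apply/im_itP; exists (step x); rewrite -iterSr iterS e. Qed.

End TotalSpace.

Section Exactness.
Variables (R : pzRingType) (C : couple R).
Local Notation alpha := (calpha C).
Local Notation beta := (cbeta C).
Local Notation gamma := (cgamma C).
Hypothesis hex : is_exact C.

Lemma alpha_gamma s t e : alpha s (t - 1) (gamma s t e) = 0.
Proof. by apply/((hex s t).2.2 _).2; exists e. Qed.

Lemma beta_alpha s t y : beta (s + 1) t (alpha s t y) = 0.
Proof. by apply/((hex s t).1 _).2; exists y. Qed.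

Lemma gamma_beta s t y : gamma s t (beta (s + 1) t y) = 0.
Proof. by apply/((hex s t).2.1 _).2; exists y. Qed.

Lemma ker_alpha s t x : alpha s (t - 1) x = 0 -> exists e, gamma s t e = x.
Proof. exact: ((hex s t).2.2 x).1. Qed.

Lemma ker_beta s t x : beta (s + 1) t x = 0 -> exists y, alpha s t y = x.
Proof. exact: ((hex s t).1 x).1. Qed.

Lemma ker_gamma s t e : gamma s t e = 0 -> exists y, beta (s + 1) t y = e.
Proof. exact: ((hex s t).2.1 e).1. Qed.

End Exactness.

Section BackwardChain.
Variables (R : pzRingType) (C : couple R).
Local Notation alpha := (calpha C).
Hypothesis hlim : lim_A_vanish C.

(* The images [alpha^m (v n)] depend only on [m - n]; their components form an element
   of [lim_s A_s] whose value at [tag (v 0)] is [v 0]. *)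
Lemma backward_chain_eq0 t (v : nat -> tot C t) :
  (forall n, step (v n.+1) = v n) -> tagged (v 0%N) = 0.
Proof.
move=> hv; pose V n m := iter m (@step _ C t) (v n).
have VS n m : V n.+1 m.+1 = V n m by rewrite /V iterSr hv.
have Vshift d n m : V (n + d)%N (m + d)%N = V n m.
  by elim: d => [|d IH]; rewrite ?addn0 // !addnS VS.
have Veq n m n' m' : m%:Z - n%:Z = m'%:Z - n'%:Z -> V n m = V n' m'.
  wlog le_nn' : n m n' m' / (n <= n')%N.
    by move=> W e; case: (leqP n n') => h; [|symmetry]; apply: W; lia.
  move=> e; rewrite -(subnKC le_nn') -(Vshift (n' - n)%N n m).
  by rewrite (_ : m' = (m + (n' - n))%N) //; lia.
pose N k := absz (k - tag (v 0%N)); pose M k := absz (k - tag (v 0%N) + (N k)%:Z).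
have NM k : (M k)%:Z - (N k)%:Z = k - tag (v 0%N) by rewrite /M /N; lia.
pose a k := proj k (V (N k) (M k)).
have a_compat k : alpha k t (a k) = a (k + 1).
  rewrite /a -proj_step (_ : step _ = V (N k) (M k).+1) //.
  rewrite (Veq (N k) (M k).+1 (N (k + 1)) (M (k + 1))) //.
  by have := NM k; have := NM (k + 1); lia.
have := hlim a_compat (tag (v 0%N)).
by rewrite /a (Veq _ _ 0%N 0%N) ?proj_tag // NM subrr.
Qed.

End BackwardChain.

Section Divisibility.
Variables (R : pzRingType) (C : couple R).
Local Notation A := (cA C).
Local Notation alpha := (calpha C).
Local Notation gamma := (cgamma C).
Hypotheses (hex : is_exact C) (hlim : lim_A_vanish C) (hRE : forall s t, RE_vanish C s t).

Definition divisible t (x : tot C t) := forall n, exists y, iter n (@step _ C t) y = x.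

Lemma divisibleE s t (b : A s t) :
  divisible (Tagged (fun s => A s t) b) <-> forall n, im_it n b.
Proof. by split=> h n; apply/im_itP; apply: h. Qed.

Lemma divisible_lift (s t : int) (x : A (s + 1) (t - 1)) : (forall n, im_it n x) ->
  exists x' : A s (t - 1), (forall n, im_it n x') /\ alpha s (t - 1) x' = x.
Proof.
move=> hx.
have /choice[d hd] : forall r, exists dr : A s (t - 1), im_it r dr /\ alpha s (t - 1) dr = x.
  move=> r; have /im_itE[c <-] := hx r.+1.
  exists (apow r s c); split; last exact: alpha_apow.
  by apply: im_it_apow; lia.
have /choice[e he] : forall r, exists er, gamma s t er = d r - d r.+1.
  by move=> r; apply: (ker_alpha hex); rewrite linearB !(proj2 (hd _)) subrr.
have Ze r : Zr r (e r).
  by rewrite /Zr he; apply: im_itB; [|apply: im_itS]; apply: (proj1 (hd _)).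
have [y [Zy ey]] := hRE Ze.
have dconst : forall r, d r - gamma s t (y r) = d 0%N - gamma s t (y 0%N).
  by apply: subr_telescope_const => r; rewrite -he ey linearB.
exists (d 0%N - gamma s t (y 0%N)); split.
  by move=> n; rewrite -(dconst n); apply: im_itB; [apply: (proj1 (hd n)) | apply: Zy].
by rewrite linearB (alpha_gamma hex) subr0 (proj2 (hd 0%N)).
Qed.

Lemma divisible_step_lift t (x : tot C (t - 1)) : divisible x ->
  exists x', divisible x' /\ step x' = x.
Proof.
move=> hx; set s := tag x - 1.
have ex : Tagged (fun s => A s (t - 1)) (proj (s + 1) x) = x by rewrite projK // subrK.
have [|x' [hx' ex']] := @divisible_lift s t (proj (s + 1) x).
  by apply/divisibleE; rewrite ex.
by exists (Tagged (fun s => A s (t - 1)) x'); split; [apply/divisibleE | rewrite /step /= ex'].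
Qed.

Lemma divisible_eq0 (s u : int) (b : A s u) : (forall n, im_it n b) -> b = 0.
Proof.
(* Rewriting the degree as [(u + 1) - 1] puts [b] in the codomain of [gamma]. *)
move: s b; rewrite -(addrK 1 u) => s b /divisibleE hb.
pose D := {x : tot C (u + 1 - 1) | divisible x}.
have /choice[f hf] : forall x : D, exists x' : D, step (proj1_sig x') = proj1_sig x.
  move=> [x hx]; have [x' [hx' ex']] := divisible_step_lift hx.
  by exists (exist _ x' hx').
apply: (@backward_chain_eq0 _ _ hlim _ (fun n => proj1_sig (iter n f (exist _ _ hb)))).
by move=> n; apply: hf.
Qed.

End Divisibility.

Section Antidifference.
Variables (R : pzRingType) (C : couple R).
Local Notation A := (cA C).
Local Notation alpha := (calpha C).

(* [c] solves [(1 - shift) c = x] in [prod_r im^r A_s]; this map has cokernel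
   [Rlim_r im^r A_s]. *)
Definition antidiff (s t : int) (x c : nat -> A s t) :=
  (forall r, im_it r (c r)) /\ forall r, x r = c r - c r.+1.

Lemma antidiffD s t (x y c d : nat -> A s t) : antidiff x c -> antidiff y d ->
  antidiff (fun r => x r + y r) (fun r => c r + d r).
Proof.
move=> [hc ec] [hd ed]; split=> r; first exact: im_itD.
by rewrite ec ed opprD addrACA.
Qed.

Lemma antidiffZ s t k (x c : nat -> A s t) : antidiff x c ->
  antidiff (fun r => k *: x r) (fun r => k *: c r).
Proof. by move=> [hc ec]; split=> r; [apply: im_itZ | rewrite ec scalerBr]. Qed.

Lemma antidiff_alpha s t (x c : nat -> A s t) : antidiff x c ->
  antidiff (fun r => alpha s t (x r)) (fun r => alpha s t (c r)).
Proof. by move=> [hc ec]; split=> r; [apply: im_it_alpha | rewrite ec linearB]. Qed.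

Hypotheses (hex : is_exact C) (hlim : lim_A_vanish C) (hRlim : Rlim_A_vanish C).
Hypothesis hRE : forall s t, RE_vanish C s t.

Lemma antidiff_unique s t (x c c' : nat -> A s t) : antidiff x c -> antidiff x c' ->
  forall r, c r = c' r.
Proof.
move=> [hc ec] [hc' ec'].
have hconst : forall r, c r - c' r = c 0%N - c' 0%N.
  by apply: subr_telescope_const => r; rewrite -ec -ec'.
move=> r; apply/eqP; rewrite -subr_eq0; apply/eqP.
by apply: (divisible_eq0 hex hlim hRE) => n; rewrite hconst -(hconst n); apply: im_itB.
Qed.

(* Write [x r = alpha^r (w r)] with [w r] in [A (s - r)], solve [z = (1 - alpha) y] for
   the sequence [z] of the [w r] using [Rlim_s A_s = 0], and take
   [c r = alpha^r (y (s - r))]. *)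
Lemma antidiff_exists s t (x : nat -> A s t) : (forall r, im_it r (x r)) ->
  exists c, antidiff x c.
Proof.
move=> hx.
have /choice[w hw] : forall r, exists y,
    iter r (@step _ C t) y = Tagged (fun s => A s t) (x r).
  by move=> r; apply/im_itP.
have tagw r : tag (w r) = s - r%:Z.
  by have := congr1 tag (hw r); rewrite tag_iter /=; lia.
pose z (k : int) : A k t := if k <= s then proj k (w (absz (s - k))) else 0.
have [y hy] := hRlim z.
pose c r := apow r s (y (s - r%:Z)).
exists c; split=> r; first by apply: im_it_apow; lia.
have zE : apow r s (z (s - r%:Z)) = x r.
  rewrite /z ifT; last by lia.
  rewrite (_ : absz (s - (s - r%:Z))%R = r); last by lia.
  by rewrite /apow /alpha_it projK // hw projE.
have alpha_y : alpha _ t (y (s - r.+1%:Z)) = y (s - r.+1%:Z + 1) - z (s - r.+1%:Z + 1).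
  by rewrite hy subKr.
rewrite /c apowSr alpha_y (_ : s - r.+1%:Z + 1 = s - r%:Z); last by lia.
by rewrite linearB /= zE subKr.
Qed.

End Antidifference.

Section Colimit.
Variables (R : pzRingType) (C : couple R).
Local Notation A := (cA C).
Local Notation alpha := (calpha C).
Local Notation beta := (cbeta C).
Variables (G : int -> lmodType R) (iota : forall s t, {linear A s t -> G t}).
Hypotheses (hcol : is_colim iota) (hex : is_exact C).
Hypotheses (hlim : lim_A_vanish C) (hRlim : Rlim_A_vanish C).
Hypothesis hRE : forall s t, RE_vanish C s t.

Lemma iota_alpha s t (a : A s t) : iota (s + 1) t (alpha s t a) = iota s t a.
Proof. exact: hcol.1. Qed.

Lemma iota_eq0 s t (a : A s t) : iota s t a = 0 <-> exists n, ker_it n a.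
Proof. exact: hcol.2.2. Qed.

Lemma iota_apow (n : nat) (k j t : int) (a : A k t) :
  k + n%:Z = j -> iota j t (apow n j a) = iota k t a.
Proof.
elim: n j => [|n IH] j; first by rewrite addr0 => <-; rewrite /apow projE.
by move: j; apply: int_shift => i e; rewrite -alpha_apow iota_alpha IH //; lia.
Qed.

Lemma Filt_le t (k j : int) (g : G t) : Filt iota k g -> k <= j -> Filt iota j g.
Proof. by move=> [a <-] kj; exists (apow (absz (j - k)) j a); apply: iota_apow; lia. Qed.

Lemma Finf_of_Filt_sub t (s : int) (g : G t) :
  (forall r : nat, Filt iota (s - r%:Z) g) -> Finf iota g.
Proof. by move=> h k; apply: (Filt_le (h (absz (s - k)))); lia. Qed.

Lemma Filt_ker_beta (s t : int) (a : A (s + 1) t) :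
  beta (s + 1) t a = 0 -> Filt iota s (iota (s + 1) t a).
Proof. by move=> /(ker_beta hex)[c <-]; exists c; rewrite iota_alpha. Qed.

Lemma Zinf_im_beta (s t : int) (e : cE C (s + 1) t) : Zinf e -> exists a, beta (s + 1) t a = e.
Proof. by move=> he; apply: (ker_gamma hex); apply: (divisible_eq0 hex hlim hRE). Qed.

Definition beta_lift (s t : int) (e : cE C (s + 1) t) : A (s + 1) t :=
  epsilon (inhabits 0) (fun a => beta (s + 1) t a = e).

Lemma beta_liftK s t (e : cE C (s + 1) t) : Zinf e -> beta (s + 1) t (beta_lift e) = e.
Proof. by move=> /Zinf_im_beta; apply: epsilon_spec. Qed.

Lemma Einf_iso (s t : int) :
  sq_iso (@Zinf _ C s t) (@Binf _ C s t) (Filt iota (s + 1) (t:=t)) (Filt iota s (t:=t)).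
Proof.
have ZinfD x y : Zinf x -> Zinf y -> Zinf (x + y).
  by move=> hx hy n; rewrite /Zr linearD; apply: im_itD; [apply: hx | apply: hy].
have ZinfZ k x : Zinf x -> Zinf (k *: x).
  by move=> hx n; rewrite /Zr linearZ; apply: im_itZ; apply: hx.
exists (fun e => iota (s + 1) t (beta_lift e)); split.
- by move=> e _; exists (beta_lift e).
- move=> x y hx hy; rewrite -!linearD -linearB; apply: Filt_ker_beta.
  by rewrite linearB (linearD (beta (s + 1) t)) !beta_liftK ?subrr //; apply: ZinfD.
- move=> k x hx; rewrite -linearZ -linearB; apply: Filt_ker_beta.
  by rewrite linearB linearZ !beta_liftK ?subrr //; apply: ZinfZ.
- move=> x hx; split.
    move=> [c ec].
    have /iota_eq0[n hn] : iota (s + 1) t (beta_lift x - alpha s t c) = 0.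
      by rewrite linearB iota_alpha ec subrr.
    exists n, (beta_lift x - alpha s t c); split => //.
    by rewrite linearB (beta_alpha hex) subr0 beta_liftK.
  move=> [n [y [hy ey]]].
  have /(ker_beta hex)[c ec] : beta (s + 1) t (beta_lift x - y) = 0.
    by rewrite linearB beta_liftK // ey subrr.
  exists c; rewrite -iota_alpha ec linearB.
  by rewrite (proj2 (iota_eq0 y) (ex_intro _ n hy)) subr0.
- move=> g [a <-]; exists (beta (s + 1) t a).
  have hz : Zinf (beta (s + 1) t a) by move=> n; rewrite /Zr (gamma_beta hex); apply: im_it0.
  split => //; rewrite -linearB; apply: Filt_ker_beta.
  by rewrite linearB beta_liftK // subrr.
Qed.

Lemma weak_conv_colim : weak_conv iota.
Proof.
split; last exact: Einf_iso.
by move=> t g; have [s [a ea]] := hcol.2.1 t g; exists s, a.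
Qed.

Lemma filt_complete_colim : filt_complete iota.
Proof.
move=> t z /dependent_choice[a ha]; have [y hy] := hRlim a.
exists (fun s => iota s t (y s)); split; first by move=> s; exists (y s).
by move=> s; rewrite -ha hy linearB iota_alpha.
Qed.

Lemma Krep_antidiff s t (x : nat -> A s t) : Krep iota x -> exists c, antidiff x c.
Proof. by move=> hx; apply: (antidiff_exists hRlim) => r; apply: (proj2 (hx r)). Qed.

Lemma Krep_alpha s t (x : nat -> A s t) : Krep iota x -> Krep iota (fun r => alpha s t (x r)).
Proof.
move=> hx r; rewrite iota_alpha.
by split; [apply: (proj1 (hx r)) | apply: im_it_alpha; apply: (proj2 (hx r))].
Qed.

Lemma antidiff_iota s t (x c : nat -> A s t) : Krep iota x -> antidiff x c ->
  forall r, iota s t (c r) = iota s t (c 0%N).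
Proof.
move=> hx [_ ec]; elim=> // r <-.
by rewrite -[c r.+1](subKr (c r)) -ec linearB (proj1 (hx r)) subr0.
Qed.

(* The isomorphism [W -> F_{-infty}] on representatives; by [antidiff_unique] the
   chosen antidifference is the only one. *)
Definition W_map (s t : int) (x : nat -> A s t) : G t :=
  iota s t (epsilon (inhabits (fun _ => 0)) (antidiff x) 0%N).

Lemma W_mapE s t (x c : nat -> A s t) : antidiff x c -> W_map x = iota s t (c 0%N).
Proof.
move=> hc; have hc' := epsilon_spec (inhabits (fun _ => 0)) _ (ex_intro _ c hc).
by rewrite /W_map (antidiff_unique hex hlim hRE hc' hc).
Qed.

Lemma W_map_Finf s t (x : nat -> A s t) : Krep iota x -> Finf iota (W_map x).
Proof.
move=> hx; have [c hc] := Krep_antidiff hx; rewrite (W_mapE hc).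
apply: (@Finf_of_Filt_sub _ s) => r; rewrite -(antidiff_iota hx hc r).
by have /im_itE[a <-] := proj1 hc r; exists a; rewrite iota_apow // subrK.
Qed.

Lemma W_mapD s t (x y : nat -> A s t) : Krep iota x -> Krep iota y ->
  W_map (fun r => x r + y r) = W_map x + W_map y.
Proof.
move=> /Krep_antidiff[c hc] /Krep_antidiff[d hd].
by rewrite (W_mapE (antidiffD hc hd)) (W_mapE hc) (W_mapE hd) linearD.
Qed.

Lemma W_mapZ s t k (x : nat -> A s t) : Krep iota x -> W_map (fun r => k *: x r) = k *: W_map x.
Proof.
by move=> /Krep_antidiff[c hc]; rewrite (W_mapE (antidiffZ k hc)) (W_mapE hc) linearZ.
Qed.

Lemma W_map_alpha s t (x : nat -> A s t) : Krep iota x ->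
  W_map (fun r => alpha s t (x r)) = W_map x.
Proof.
by move=> /Krep_antidiff[c hc]; rewrite (W_mapE (antidiff_alpha hc)) (W_mapE hc) iota_alpha.
Qed.

Lemma W_map_eq0 s t (x : nat -> A s t) : Krep iota x ->
  W_map x = 0 <-> exists n, evD iota n x.
Proof.
move=> hx; split.
  have [c hc] := Krep_antidiff hx; rewrite (W_mapE hc) => hc0.
  exists 0%N, c; split; last exact: proj2 hc.
  by move=> r; rewrite (antidiff_iota hx hc); split; [|apply: (proj1 hc)].
move=> [n]; elim: n s x hx => [|n IH] s x hx /=.
  move=> [y [hy ey]]; rewrite (W_mapE (conj (fun r => proj2 (hy r)) ey)).
  exact: (proj1 (hy 0%N)).
by move=> /IH; rewrite W_map_alpha //; apply; apply: Krep_alpha.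
Qed.

Lemma W_map_surj t (g : G t) : Finf iota g ->
  exists s (x : nat -> A s t), Krep iota x /\ W_map x = g.
Proof.
move=> hg; have /dependent_choice[w hw] : forall r : nat, Filt iota (0 - r%:Z) g by [].
pose c r := apow r 0 (w r).
have ic r : im_it r (c r) by apply: im_it_apow; rewrite subrK.
have gc r : iota 0 t (c r) = g by rewrite iota_apow ?hw // subrK.
exists 0, (fun r => c r - c r.+1); split.
  move=> r; rewrite linearB !gc subrr; split => //.
  by apply: im_itB; [|apply: im_itS].
by rewrite (W_mapE (conj ic (fun r => erefl))) gc.
Qed.

Lemma Finf_iso_W_colim t : Finf_iso_W iota t.
Proof.
exists (fun s x => W_map x); split.
- by move=> s x; apply: W_map_Finf.
- by split=> s; [apply: W_mapD | apply: W_mapZ].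
- by move=> s x; apply: W_map_alpha.
- by move=> s x; apply: W_map_eq0.
- exact: W_map_surj.
Qed.

End Colimit.

Theorem theorem3p8 (R : pzRingType) (C : couple R)
  (G : int -> lmodType R) (iota : forall s t, {linear cA C s t -> G t}) :
  is_exact C -> conv_cond C -> is_colim iota ->
  (forall s t, RE_vanish C s t) ->
  weak_conv iota /\ filt_complete iota /\ (forall t, Finf_iso_W iota t).
Proof.
move=> hex [hlim hRlim] hcol hRE; split; last split.
- exact: weak_conv_colim.
- exact: filt_complete_colim.
- by move=> t; apply: Finf_iso_W_colim.
Qed.
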